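(* Let $\mathbf A$ be a Mal'cev algebra, let $n\ge 1$, and let $\alpha_0,\dots,\alpha_{n-1}$ be congruences of $\mathbf A$. Then \[ [\alpha_0,\dots,\alpha_{n-1}] = \psi_{2^n-1}\big(\Delta(\alpha_0,\dots,\alpha_{n-1})\big). \]
   Context: A Mal'cev algebra is an algebra having a ternary term operation $q$ with $q(x,x,y)=y=q(y,x,x)$ for all $x,y$. Higher commutator (Bulatov): for congruences $\alpha_0,\dots,\alpha_{n-1},\gamma$ of $\mathbf A$, say $\alpha_0,\dots,\alpha_{n-2}$ centralize $\alpha_{n-1}$ modulo $\gamma$ if for all tuples $\mathbf a_i,\mathbf b_i$ ($i<n$, of arbitrary lengths, with $\mathbf a_i\neq\mathbf b_i$ and $\mathbf a_i,\mathbf b_i$ congruent modulo $\alpha_i$ coordinatewise) and every term operation $t$ of $\mathbf A$ such that $t(\mathbf x_0,\dots,\mathbf x_{n-2},\mathbf a_{n-1})\equiv_\gamma t(\mathbf x_0,\dots,\mathbf x_{n-2},\mathbf b_{n-1})$ for all $(\mathbf x_0,\dots,\mathbf x_{n-2})\in(\{\mathbf a_0,\mathbf b_0\}\times\dots\times\{\mathbf a_{n-2},\mathbf b_{n-2}\})\setminus\{(\mathbf b_0,\dots,\mathbf b_{n-2})\}$, we have $t(\mathbf b_0,\dots,\mathbf b_{n-2},\mathbf a_{n-1})\equiv_\gamma t(\mathbf b_0,\dots,\mathbf b_{n-2},\mathbf b_{n-1})$. The commutator $[\alpha_0,\dots,\alpha_{n-1}]$ is the smallest congruence $\gamma$ such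 that $\alpha_0,\dots,\alpha_{n-2}$ centralize $\alpha_{n-1}$ modulo $\gamma$. Tuples in $A^m$ are indexed by $0,\dots,m-1$. For an integer $k\ge 0$ and $i\ge0$, $k_{(i)}\in\{0,1\}$ denotes the $i$-th binary digit of $k$ (counting from the least significant digit, starting at $0$), so $k=\sum_i 2^ik_{(i)}$. For $a,b\in A$ and $i<n$, $\mathbf c_i^n(a,b)\in A^{2^n}$ is the tuple whose $k$-th coordinate ($k<2^n$) is $a$ if $k_{(i)}=0$ and $b$ if $k_{(i)}=1$. For congruences $\alpha_0,\dots,\alpha_{n-1}$, $\Delta(\alpha_0,\dots,\alpha_{n-1})=\Delta_{\mathbf A}(\alpha_0,\dots,\alpha_{n-1})$ is the subuniverse of $\mathbf A^{2^n}$ generated by $\{\mathbf c_i^n(a,b): i<n,\ (a,b)\in\alpha_i\}$; for $n=0$, $\Delta()=A$. Forks: for $R\subseteq A^m$ and $i<m$, $\psi_i(R)$ is the set of pairs $(a,b)$ for which there exist $\mathbf c,\mathbf d\in R$ with $c_i=a$, $d_i=b$ and $c_j=d_j$ for all $j\neq i$. *)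

From mathcomp Require Import all_boot.
Set Implicit Arguments. Unset Strict Implicit. Unset Printing Implicit Defensive.

Section UA.
Variables (F : Type) (ar : F -> nat) (A : Type) (op : forall f : F, ('I_(ar f) -> A) -> A).

Inductive term (V : Type) : Type :=
  | Var : V -> term V
  | App : forall f : F, ('I_(ar f) -> term V) -> term V.

Fixpoint eval (V : Type) (env : V -> A) (t : term V) : A :=
  match t with
  | Var v => env v
  | App f ts => op (fun j => eval env (ts j))
  end.

Definition malcev : Prop :=
  exists q : term 'I_3,
    forall x y : A,
      eval (fun j : 'I_3 => nth x [:: x; x; y] j) q = y /\
      eval (fun j : 'I_3 => nth x [:: y; x; x] j) q = y.

Definition is_congruence (theta : A -> A -> Prop) : Prop :=
  (forall x, theta x x) /\
  (forall x y, theta x y -> theta y x) /\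
  (forall x y z, theta x y -> theta y z -> theta x z) /\
  (forall (f : F) (x y : 'I_(ar f) -> A),
      (forall j, theta (x j) (y j)) -> theta (op x) (op y)).

(* Assignment of variables: the variable (i, j) stands for the j-th coordinate of
   the i-th tuple argument; for i < n-1 the tuple is a_i or b_i according to s i,
   for the last index i = n-1 it is a_i or b_i according to last. *)
Definition centr_env (n : nat) (m : 'I_n -> nat) (a b : forall i : 'I_n, 'I_(m i) -> A)
    (s : 'I_n -> bool) (last : bool) : {i : 'I_n & 'I_(m i)} -> A :=
  fun p => let (i, j) := p in
    if i.+1 < n then (if s i then b i j else a i j)
    else (if last then b i j else a i j).

(* alpha_0, ..., alpha_{n-2} centralize alpha_{n-1} modulo gamma (Bulatov). *)
Definition centralizes (n : nat) (alpha : 'I_n -> A -> A -> Prop) (gamma : A -> A -> Prop) : Prop :=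
  forall (m : 'I_n -> nat) (a b : forall i : 'I_n, 'I_(m i) -> A),
    (forall i, exists j, a i j <> b i j) ->
    (forall i j, alpha i (a i j) (b i j)) ->
    forall t : term {i : 'I_n & 'I_(m i)},
      (forall s : 'I_n -> bool, (exists i : 'I_n, i.+1 < n /\ s i = false) ->
         gamma (eval (centr_env a b s false) t) (eval (centr_env a b s true) t)) ->
      gamma (eval (centr_env a b (fun _ => true) false) t)
            (eval (centr_env a b (fun _ => true) true) t).

Definition is_commutator (n : nat) (alpha : 'I_n -> A -> A -> Prop) (gamma : A -> A -> Prop) : Prop :=
  is_congruence gamma /\ centralizes alpha gamma /\
  forall gamma', is_congruence gamma' -> centralizes alpha gamma' ->
    forall x y, gamma x y -> gamma' x y.

(* c_i^n(a,b) in A^(2^n): coordinate k is a if the i-th binary digit of k is 0, else b. *)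
Definition cvec (n i : nat) (x y : A) : 'I_(2 ^ n) -> A :=
  fun k => if odd (k %/ 2 ^ i) then y else x.

Inductive Delta (n : nat) (alpha : 'I_n -> A -> A -> Prop) : ('I_(2 ^ n) -> A) -> Prop :=
  | Delta_gen : forall (i : 'I_n) (x y : A), alpha i x y -> @Delta n alpha (@cvec n i x y)
  | Delta_op : forall (f : F) (args : 'I_(ar f) -> 'I_(2 ^ n) -> A),
      (forall j, @Delta n alpha (args j)) ->
      @Delta n alpha (fun k => op (fun j => args j k)).

Definition psi (m : nat) (i : 'I_m) (R : ('I_m -> A) -> Prop) : A -> A -> Prop :=
  fun x y => exists c d : 'I_m -> A,
    R c /\ R d /\ c i = x /\ d i = y /\ (forall j : 'I_m, j != i -> c j = d j).

End UA.

Lemma last_idx_lt (n : nat) : (2 ^ n).-1 < 2 ^ n.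
Proof. by rewrite ltn_predL expn_gt0. Qed.

Definition last_idx (n : nat) : 'I_(2 ^ n) := Ordinal (last_idx_lt n).

From mathcomp Require Import all_boot zify.
From Stdlib Require Import FunctionalExtensionality PropExtensionality ClassicalEpsilon.

Set Implicit Arguments. Unset Strict Implicit. Unset Printing Implicit Defensive.

(* Index the coordinates of A^(2^n) by the cube {0,1}^n: Delta becomes [delta_cube]
   and psi_(2^n-1) becomes [top_fork], the forks at the top vertex.  Using the
   Mal'cev term, forks compose (so [top_fork] is a congruence), can be moved to any
   vertex by reflections of the cube, and can be patched into members of Delta.
   Bulatov's condition says: if the values of a member c of Delta at the two ends of
   every edge in direction n-1 other than the top one are gamma-related, so are those
   at the ends of the top edge.  [top_fork] satisfies it: patching those forks into c
   overwrites its face s_(n-1) = 1, except the top, by its face s_(n-1) = 0, which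
   yields a fork between the ends of the top edge.  Conversely, for a fork (c, d) the
   member q(c, d, d'), where d' is d composed with the projection onto the face
   s_(n-1) = 1, takes equal values at the ends of every edge but the top one, and
   the values d(top), c(top) there; so every congruence satisfying the condition
   contains [top_fork]. *)

Lemma eq_from_bits N k k' : k < 2 ^ N -> k' < 2 ^ N ->
  (forall i, i < N -> odd (k %/ 2 ^ i) = odd (k' %/ 2 ^ i)) -> k = k'.
Proof.
elim: N k k' => [|N IH] k k' ltk ltk' eq_bits.
  by move: ltk ltk'; rewrite expn0 !ltnS !leqn0 => /eqP -> /eqP ->.
have eq_half : k %/ 2 = k' %/ 2.
  apply: IH; rewrite ?ltn_divLR -?expnSr //.
  by move=> i lti; rewrite -!divnMA -expnS; apply: eq_bits.
have := eq_bits 0 isT; rewrite !expn0 !divn1 => eq_odd.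
by rewrite (divn_eq k 2) (divn_eq k' 2) eq_half !modn2 eq_odd.
Qed.

Lemma odd_pred_exp2_div N i : i < N -> odd ((2 ^ N).-1 %/ 2 ^ i).
Proof.
move=> ltiN; have pos_hi : 0 < 2 ^ (N - i) by rewrite expn_gt0.
have pos_lo : 0 < 2 ^ i by rewrite expn_gt0.
have -> : (2 ^ N).-1 = (2 ^ (N - i)).-1 * 2 ^ i + (2 ^ i).-1.
  rewrite -[in LHS](subnKC (ltnW ltiN)) expnD.
  by move: pos_hi pos_lo; move: (2 ^ (N - i)) (2 ^ i) => p r; nia.
rewrite divnMDl // divn_small ?addn0 ?ltn_predL // -subn1 oddB // oddX.
by rewrite subn_eq0 leqNgt ltiN.
Qed.

Section TermEval.
Variables (F : Type) (ar : F -> nat) (A : Type) (op : forall f : F, ('I_(ar f) -> A) -> A).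

Fixpoint rename (V W : Type) (g : V -> W) (t : term ar V) : term ar W :=
  match t with
  | Var v => Var ar (g v)
  | App f ts => App (fun j => rename g (ts j))
  end.

Lemma eq_eval V (e1 e2 : V -> A) t : e1 =1 e2 -> eval op e1 t = eval op e2 t.
Proof.
move=> eq_e; elim: t => [v|f ts IH] //=.
by congr op; apply: functional_extensionality => j; exact: IH.
Qed.

Lemma eval_rename V W (g : V -> W) env t :
  eval op env (rename g t) = eval op (fun v => env (g v)) t.
Proof.
elim: t => [v|f ts IH] //=.
by congr op; apply: functional_extensionality => j; exact: IH.
Qed.

End TermEval.

Section Cube.
Variables (F : Type) (ar : F -> nat) (A : Type) (op : forall f : F, ('I_(ar f) -> A) -> A).
Variables (n : nat) (alpha : 'I_n -> A -> A -> Prop).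
Hypothesis alpha_cong : forall i, is_congruence op (alpha i).
Hypothesis n_gt0 : 0 < n.

Definition cube := {ffun 'I_n -> bool}.
Definition top : cube := [ffun => true].

Inductive delta_cube : (cube -> A) -> Prop :=
  | delta_cube_gen i x y : alpha i x y -> delta_cube (fun s => if s i then y else x)
  | delta_cube_op f (args : 'I_(ar f) -> cube -> A) :
      (forall j, delta_cube (args j)) -> delta_cube (fun s => op (fun j => args j s)).

Lemma delta_cube_eval V (env : V -> cube -> A) t :
  (forall v, delta_cube (env v)) -> delta_cube (fun s => eval op (fun v => env v s) t).
Proof. by move=> denv; elim: t => [v|f ts IH] /=; [exact: denv | exact: delta_cube_op]. Qed.

Lemma delta_cube_const x : delta_cube (fun _ => x).
Proof.
have -> : (fun _ : cube => x) = (fun s : cube => if s (Ordinal n_gt0) then x else x).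
  by apply: functional_extensionality => s; case: ifP.
by apply: delta_cube_gen; case: (alpha_cong (Ordinal n_gt0)).
Qed.

Lemma delta_cube_comp (h : cube -> cube) c :
  (forall i, (exists b, forall s, h s i = b) \/ (exists b, forall s, h s i = b (+) s i)) ->
  delta_cube c -> delta_cube (fun s => c (h s)).
Proof.
move=> hcoord; elim=> [i x y axy|f args _ IH] /=; last exact: delta_cube_op.
have [refl_a [sym_a _]] := alpha_cong i.
case: (hcoord i) => [[b hb]|[[] hb]].
- pose z := if b then y else x.
  have -> : (fun s => if h s i then y else x) = (fun s : cube => if s i then z else z).
    by apply: functional_extensionality => s; rewrite hb; case: (s i).
  exact/delta_cube_gen/refl_a.
- have -> : (fun s => if h s i then y else x) = (fun s : cube => if s i then x else y).
    by apply: functional_extensionality => s; rewrite hb; case: (s i).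
  exact/delta_cube_gen/sym_a.
- have -> : (fun s => if h s i then y else x) = (fun s : cube => if s i then y else x).
    by apply: functional_extensionality => s; rewrite hb; case: (s i).
  exact: delta_cube_gen.
Qed.

Record cube_term := CubeTerm {
  ct_var : finType;
  ct_coord : ct_var -> 'I_n;
  ct_lo : ct_var -> A;
  ct_hi : ct_var -> A;
  ct_term : term ar ct_var }.

Definition ct_env (r : cube_term) (s : cube) (v : ct_var r) : A :=
  if s (ct_coord v) then ct_hi v else ct_lo v.
Arguments ct_env : clear implicits.

Definition ct_eval (r : cube_term) (s : cube) : A := eval op (ct_env r s) (ct_term r).

Lemma delta_cube_term c : delta_cube c ->
  exists r : cube_term,
    (forall v : ct_var r, alpha (ct_coord v) (ct_lo v) (ct_hi v)) /\ c =1 ct_eval r.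
Proof.
elim=> [i x y axy|f args _ IH].
  by exists (@CubeTerm unit (fun _ => i) (fun _ => x) (fun _ => y) (Var ar tt)).
have [rs rsP] := ClassicalEpsilon.choice _ IH.
pose V := {j : 'I_(ar f) & ct_var (rs j)}.
pose coord (v : V) := let: existT _ w := v in ct_coord w.
pose lo (v : V) := let: existT _ w := v in ct_lo w.
pose hi (v : V) := let: existT _ w := v in ct_hi w.
pose t : term ar V :=
  App (fun j => rename (fun w => existT (fun j => ct_var (rs j)) j w) (ct_term (rs j))).
exists (CubeTerm coord lo hi t); split=> [[j w]|s]; first by case: (rsP j) => + _; apply.
rewrite /ct_eval /=; congr op; apply: functional_extensionality => j.
by rewrite eval_rename; case: (rsP j) => _ ->.
Qed.

Lemma ct_eval_flat r i0 (s s' : cube) :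
  (forall v : ct_var r, ct_coord v = i0 -> ct_lo v = ct_hi v) ->
  (forall i, i != i0 -> s i = s' i) -> ct_eval r s = ct_eval r s'.
Proof.
move=> flat eq_off; apply: eq_eval => v; rewrite /ct_env.
have [/flat eq_v|/eq_off ->] := eqVneq (ct_coord v) i0; last by [].
by rewrite eq_v; case: ifP; case: ifP.
Qed.

Lemma ilast_subproof : n.-1 < n. Proof. by rewrite ltn_predL. Qed.
Definition ilast : 'I_n := Ordinal ilast_subproof.

Lemma ltn_ilast (i : 'I_n) : (i.+1 < n) = (i != ilast).
Proof. by rewrite -(inj_eq val_inj) /=; case: i => i /= lt_in; lia. Qed.

Definition set_last (s : cube) (b : bool) : cube :=
  [ffun i => if i == ilast then b else s i].

Lemma set_last_ilast s b : set_last s b ilast = b.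
Proof. by rewrite ffunE eqxx. Qed.

Lemma set_lastK s b b' : set_last (set_last s b) b' = set_last s b'.
Proof. by apply/ffunP => i; rewrite !ffunE; case: eqP. Qed.

Lemma set_last_id s : set_last s (s ilast) = s.
Proof. by apply/ffunP => i; rewrite !ffunE; case: eqP => // ->. Qed.

Lemma set_last_false_neq_top s : set_last s false != top.
Proof. by apply/eqP => /ffunP /(_ ilast); rewrite !ffunE eqxx. Qed.

Lemma set_last_top : set_last top true = top.
Proof. by apply/ffunP => i; rewrite !ffunE; case: eqP. Qed.

Lemma set_last_neq_top s : set_last s true != top -> exists2 i, i != ilast & s i = false.
Proof.
move=> ne_top; have /existsP[i si_false] : [exists i, ~~ set_last s true i].
  apply: contraR ne_top => /existsPn all_true; apply/eqP/ffunP => i.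
  by rewrite [top i]ffunE; exact/negbNE/all_true.
by exists i; move: si_false; rewrite ffunE; case: eqP => // _ /negbTE.
Qed.

Lemma delta_cube_set_last c b : delta_cube c -> delta_cube (fun s => c (set_last s b)).
Proof.
apply: delta_cube_comp => i; have [->|ne_i] := eqVneq i ilast.
  by left; exists b => s; rewrite set_last_ilast.
by right; exists false => s; rewrite ffunE (negbTE ne_i).
Qed.

(* Bulatov's condition, with a member of Delta in place of a term applied to tuples. *)
Definition cube_centralizes (gamma : A -> A -> Prop) : Prop :=
  forall c, delta_cube c ->
    (forall s, set_last s true != top -> gamma (c (set_last s false)) (c (set_last s true))) ->
    gamma (c (set_last top false)) (c top).

Definition bit_env (m : 'I_n -> nat) (a b : forall i : 'I_n, 'I_(m i) -> A) (s : cube) :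
  {i : 'I_n & 'I_(m i)} -> A :=
  fun p => let: existT i j := p in if s i then b i j else a i j.

Lemma centr_env_set_last m (a b : forall i : 'I_n, 'I_(m i) -> A) s last :
  centr_env a b s last =1 bit_env a b (set_last [ffun i => s i] last).
Proof. by move=> [i j]; rewrite /= !ffunE ltn_ilast; case: eqP. Qed.

Lemma cube_centralizes_centralizes gamma :
  cube_centralizes gamma -> centralizes op alpha gamma.
Proof.
move=> cc m a b _ ab t hyp.
pose c s := eval op (bit_env a b s) t.
have dc : delta_cube c.
  by apply: (@delta_cube_eval _ (fun v s => bit_env a b s v)) => -[i j]; exact: delta_cube_gen.
have eval_centr s last : eval op (centr_env a b s last) t = c (set_last [ffun i => s i] last).
  exact/eq_eval/centr_env_set_last.
rewrite !eval_centr -/top set_last_top; apply: cc dc _ => s /set_last_neq_top[i ne_i si].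
by have := hyp s; rewrite !eval_centr ffunK; apply; exists i; rewrite ltn_ilast.
Qed.

Lemma centralizes_ct_eval gamma (r : cube_term) :
  centralizes op alpha gamma ->
  (forall v : ct_var r, alpha (ct_coord v) (ct_lo v) (ct_hi v)) ->
  (forall i, exists v : ct_var r, ct_coord v = i /\ ct_lo v <> ct_hi v) ->
  (forall s, set_last s true != top ->
     gamma (ct_eval r (set_last s false)) (ct_eval r (set_last s true))) ->
  gamma (ct_eval r (set_last top false)) (ct_eval r top).
Proof.
move=> centr r_alpha nondeg hyp.
pose m (_ : 'I_n) := #|ct_var r|.
pose a i (j : 'I_(m i)) := ct_lo (enum_val j).
pose b i (j : 'I_(m i)) :=
  if ct_coord (enum_val j) == i then ct_hi (enum_val j) else ct_lo (enum_val j).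
pose t := rename (fun v => existT (fun i => 'I_(m i)) (ct_coord v) (enum_rank v)) (ct_term r).
have eval_t s last :
    eval op (centr_env a b s last) t = ct_eval r (set_last [ffun i => s i] last).
  rewrite eval_rename; apply: eq_eval => v.
  by rewrite centr_env_set_last /= /a /b enum_rankK eqxx.
have := centr m a b _ _ t; rewrite !eval_t -/top set_last_top; apply.
- move=> i; have [v [<- ne_v]] := nondeg i.
  by exists (enum_rank v); rewrite /a /b enum_rankK eqxx.
- move=> i j; rewrite /a /b; case: eqP => [<-|_]; first exact: r_alpha.
  by case: (alpha_cong i).
- move=> s [i [lt_i si]]; rewrite !eval_t; apply: hyp.
  move: lt_i; rewrite ltn_ilast => /negbTE ne_i.
  by apply/eqP => /ffunP/(_ i); rewrite !ffunE ne_i si.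
Qed.

Lemma centralizes_cube_centralizes gamma :
  (forall x, gamma x x) -> centralizes op alpha gamma -> cube_centralizes gamma.
Proof.
move=> refl_g centr c /delta_cube_term[r [r_alpha eq_c]] hyp; rewrite !eq_c.
have {}hyp s : set_last s true != top ->
    gamma (ct_eval r (set_last s false)) (ct_eval r (set_last s true)).
  by move=> ne_top; rewrite -!eq_c; apply: hyp.
have [nondeg|] := classic (forall i, exists v : ct_var r, ct_coord v = i /\ ct_lo v <> ct_hi v).
  exact: centralizes_ct_eval.
(* Coordinate i0 cannot be chosen to satisfy a_i0 <> b_i0, but the term ignores it. *)
move=> /not_all_ex_not[i0 /not_ex_all_not not_sep].
have flat (v : ct_var r) : ct_coord v = i0 -> ct_lo v = ct_hi v.
  by move=> eq_v; apply: NNPP => ne_v; exact: (not_sep v (conj eq_v ne_v)).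
have [eq_i0|ne_i0] := eqVneq i0 ilast.
  rewrite (@ct_eval_flat r i0 _ top flat); first exact: refl_g.
  by move=> i; rewrite eq_i0 ffunE => /negbTE ->.
pose s0 : cube := [ffun i => i != i0].
have eq_s0 b : ct_eval r (set_last s0 b) = ct_eval r (set_last top b).
  by apply: (ct_eval_flat flat) => i ne_i; rewrite !ffunE ne_i.
have := hyp s0; rewrite !eq_s0 set_last_top; apply.
by apply/eqP => /ffunP/(_ i0); rewrite !ffunE (negbTE ne_i0) eqxx.
Qed.

Lemma centralizes_cubeP gamma :
  (forall x, gamma x x) -> centralizes op alpha gamma <-> cube_centralizes gamma.
Proof.
move=> refl_g; split; first exact: centralizes_cube_centralizes.
exact: cube_centralizes_centralizes.
Qed.

Definition fork_at (s0 : cube) (x y : A) (c d : cube -> A) : Prop :=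
  [/\ delta_cube c, delta_cube d, c s0 = x, d s0 = y & forall s, s != s0 -> c s = d s].

Definition top_fork (x y : A) : Prop := exists c d, fork_at top x y c d.

Lemma top_fork_move s0 x y : top_fork x y -> exists c d, fork_at s0 x y c d.
Proof.
move=> [c [d [dc dd cx dy eq_cd]]].
pose h (s : cube) : cube := [ffun i => ~~ s0 i (+) s i].
have h_coord i : (exists b, forall s, h s i = b) \/ (exists b, forall s, h s i = b (+) s i).
  by right; exists (~~ s0 i) => s; rewrite ffunE.
have h_s0 : h s0 = top by apply/ffunP => i; rewrite !ffunE; case: (s0 i).
exists (fun s => c (h s)), (fun s => d (h s)); split; rewrite ?h_s0 //.
- exact: delta_cube_comp.
- exact: delta_cube_comp.
move=> s ne_s; apply: eq_cd; apply: contra ne_s => /eqP/ffunP eq_h; apply/eqP/ffunP => i.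
by have := eq_h i; rewrite !ffunE; case: (s i); case: (s0 i).
Qed.

Definition cube_of_index (k : 'I_(2 ^ n)) : cube := [ffun i : 'I_n => odd (k %/ 2 ^ i)].

Lemma cube_of_index_inj : injective cube_of_index.
Proof.
move=> k k' /ffunP eq_k; apply: val_inj; apply: (eq_from_bits (ltn_ord k) (ltn_ord k')) => i lt_in.
by have := eq_k (Ordinal lt_in); rewrite !ffunE.
Qed.

Lemma cube_of_index_bij : bijective cube_of_index.
Proof. by apply: (inj_card_bij cube_of_index_inj); rewrite card_ffun card_bool !card_ord. Qed.

Lemma cube_of_last_idx : cube_of_index (last_idx n) = top.
Proof. by apply/ffunP => i; rewrite !ffunE odd_pred_exp2_div. Qed.

Lemma Delta_delta_cube g e :
  cancel g cube_of_index -> Delta op alpha e -> delta_cube (fun s => e (g s)).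
Proof.
move=> gK; elim=> [i x y axy|f args _ IH]; last exact: delta_cube_op.
have -> : (fun s => cvec i x y (g s)) = (fun s : cube => if s i then y else x).
  apply: functional_extensionality => s; rewrite /cvec.
  by have := congr1 (fun t : cube => t i) (gK s); rewrite ffunE => ->.
exact: delta_cube_gen.
Qed.

Lemma delta_cube_Delta c : delta_cube c -> Delta op alpha (fun k => c (cube_of_index k)).
Proof.
elim=> [i x y axy|f args _ IH]; last exact: Delta_op.
have -> : (fun k => if cube_of_index k i then y else x) = cvec i x y.
  by apply: functional_extensionality => k; rewrite ffunE.
exact: Delta_gen.
Qed.

Lemma psi_last_idx_top_fork x y : psi (last_idx n) (Delta op alpha) x y <-> top_fork x y.
Proof.
have [g gK Kg] := cube_of_index_bij.
have g_top : g top = last_idx n by rewrite -cube_of_last_idx gK.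
split=> [[c [d [dc [dd [cx [dy eq_cd]]]]]]|[c [d [dc dd cx dy eq_cd]]]].
  exists (fun s => c (g s)), (fun s => d (g s)); split; rewrite ?g_top //.
  - exact: Delta_delta_cube.
  - exact: Delta_delta_cube.
  move=> s ne_top; apply: eq_cd; apply: contra ne_top => /eqP eq_g.
  by rewrite -(Kg s) eq_g cube_of_last_idx.
exists (fun k => c (cube_of_index k)), (fun k => d (cube_of_index k)).
rewrite cube_of_last_idx; do 2?split; try exact: delta_cube_Delta.
do 2!split=> //; move=> k ne_k; apply: eq_cd; apply: contra ne_k => /eqP eq_k.
by apply/eqP/cube_of_index_inj; rewrite eq_k cube_of_last_idx.
Qed.

Section Malcev.
Variable q : term ar 'I_3.

Definition qop (x y z : A) : A := eval op (fun j : 'I_3 => nth x [:: x; y; z] j) q.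

Hypothesis qop_xxy : forall x y, qop x x y = y.
Hypothesis qop_yxx : forall x y, qop y x x = y.

Lemma delta_cube_qop c1 c2 c3 : delta_cube c1 -> delta_cube c2 -> delta_cube c3 ->
  delta_cube (fun s => qop (c1 s) (c2 s) (c3 s)).
Proof.
move=> d1 d2 d3; have := @delta_cube_eval _ (fun j : 'I_3 => nth c1 [:: c1; c2; c3] j) q.
have -> : (fun s => eval op (fun j : 'I_3 => nth c1 [:: c1; c2; c3] j s) q) =
          (fun s => qop (c1 s) (c2 s) (c3 s)).
  by apply: functional_extensionality => s; apply: eq_eval => -[[|[|[|j]]] lt_j].
by apply=> -[[|[|[|j]]] lt_j].
Qed.

Lemma top_fork_cong : is_congruence op top_fork.
Proof.
split; [|split; [|split]].
- move=> x; exists (fun _ => x), (fun _ => x).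
  by split=> //; exact: delta_cube_const.
- move=> x y [c [d [dc dd cx dy eq_cd]]]; exists d, c.
  by split=> // s /eq_cd.
- move=> x y z [c [d [dc dd cx dy eq_cd]]] [c' [d' [dc' dd' cy dz eq_cd']]].
  exists c, (fun s => qop (d' s) (c' s) (d s)); split=> //.
  + exact: delta_cube_qop.
  + by rewrite cy dz -dy qop_yxx.
  + by move=> s ne_s; rewrite eq_cd' // qop_xxy eq_cd.
move=> f x y xy.
have [cd cdP] : exists cd : 'I_(ar f) -> (cube -> A) * (cube -> A),
    forall j, fork_at top (x j) (y j) (cd j).1 (cd j).2.
  apply: (ClassicalEpsilon.choice
    (fun j (cd : (cube -> A) * (cube -> A)) => fork_at top (x j) (y j) cd.1 cd.2)) => j.
  by have [c [d fork]] := xy j; exists (c, d).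
exists (fun s => op (fun j => (cd j).1 s)), (fun s => op (fun j => (cd j).2 s)).
split; try (congr op; apply: functional_extensionality => j).
- by apply: delta_cube_op => j; case: (cdP j).
- by apply: delta_cube_op => j; case: (cdP j).
- by case: (cdP j).
- by case: (cdP j).
move=> s ne_s; congr op; apply: functional_extensionality => j.
by case: (cdP j) => _ _ _ _ ->.
Qed.

Lemma delta_cube_update s0 c y : delta_cube c -> top_fork (c s0) y ->
  delta_cube (fun s => if s == s0 then y else c s).
Proof.
move=> dc /(top_fork_move s0)[c' [d' [dc' dd' cs0 dy eq_cd']]].
have -> : (fun s => if s == s0 then y else c s) = (fun s => qop (c s) (c' s) (d' s)).
  apply: functional_extensionality => s.
  by have [->|/eq_cd' ->] := eqVneq s s0; rewrite ?cs0 ?dy ?qop_xxy ?qop_yxx.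
exact: delta_cube_qop.
Qed.

Lemma delta_cube_patch (P : pred cube) c d :
  delta_cube c -> (forall s, P s -> top_fork (c s) (d s)) ->
  delta_cube (fun s => if P s then d s else c s).
Proof.
move=> dc fork_cd; have [refl_fork _] := top_fork_cong.
suff patch_seq (l : seq cube) : {subset l <= P} ->
    delta_cube (fun s => if s \in l then d s else c s).
  have -> : (fun s => if P s then d s else c s) = (fun s => if s \in enum P then d s else c s).
    by apply: functional_extensionality => s; rewrite mem_enum.
  by apply: patch_seq => s; rewrite mem_enum.
elim: l => [|s0 l IH] sub_l; first exact: dc.
have -> : (fun s => if s \in s0 :: l then d s else c s) =
          (fun s => if s == s0 then d s0 else if s \in l then d s else c s).
  by apply: functional_extensionality => s; rewrite in_cons; case: eqP => // ->.
apply: delta_cube_update; first by apply: IH => s l_s; apply: sub_l; rewrite in_cons l_s orbT.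
by case: ifP => _; [exact: refl_fork | exact/fork_cd/sub_l/mem_head].
Qed.

Lemma top_fork_cube_centralizes : cube_centralizes top_fork.
Proof.
move=> c dc hyp; have [_ [sym_fork _]] := top_fork_cong.
pose d (s : cube) := if s ilast && (s != top) then c (set_last s false) else c s.
exists (fun s => c (set_last s false)), d; split=> //.
- exact: delta_cube_set_last.
- apply: delta_cube_patch => // s /andP[s_last ne_top]; apply: sym_fork.
  have eq_s : set_last s true = s by rewrite -[in set_last _ true]s_last set_last_id.
  by have := hyp s; rewrite eq_s; apply.
- by rewrite /d eqxx andbF.
move=> s ne_top; rewrite /d ne_top andbT.
by case: ifPn => // /negbTE s_last; rewrite -s_last set_last_id.
Qed.

Lemma top_fork_min gamma : is_congruence op gamma -> cube_centralizes gamma ->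
  forall x y, top_fork x y -> gamma x y.
Proof.
move=> [refl_g [sym_g _]] cc x y [c [d [dc dd <- <- eq_cd]]].
pose e (s : cube) := qop (c s) (d s) (d (set_last s true)).
have de : delta_cube e by apply: delta_cube_qop => //; exact: delta_cube_set_last.
have e_true s : e (set_last s true) = c (set_last s true) by rewrite /e set_lastK qop_yxx.
have e_false s : e (set_last s false) = d (set_last s true).
  by rewrite /e set_lastK eq_cd ?set_last_false_neq_top // qop_xxy.
have e_top : e top = c top by rewrite -[top]set_last_top e_true.
apply: sym_g; have := cc e de; rewrite e_false e_top set_last_top; apply=> s ne_top.
by rewrite e_false e_true eq_cd.
Qed.

End Malcev.

End Cube.

Theorem mainTheorem1 (F : Type) (ar : F -> nat) (A : Type)
    (op : forall f : F, ('I_(ar f) -> A) -> A)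
    (n : nat) (alpha : 'I_n -> A -> A -> Prop) :
  malcev op -> 1 <= n ->
  (forall i, is_congruence op (alpha i)) ->
  is_commutator op alpha (psi (last_idx n) (Delta op alpha)).
Proof.
move=> [q q_malcev] n_gt0 alpha_cong.
have qop_xxy x y : qop op q x x y = y by case: (q_malcev x y).
have qop_yxx x y : qop op q y x x = y.
  by rewrite -[RHS](proj2 (q_malcev x y)); apply: eq_eval => -[[|[|[|j]]] lt_j].
have -> : psi (last_idx n) (Delta op alpha) = top_fork op alpha.
  apply: functional_extensionality => x; apply: functional_extensionality => y.
  exact/propositional_extensionality/psi_last_idx_top_fork.
have fork_cong := top_fork_cong alpha_cong n_gt0 qop_xxy qop_yxx.
have cubeP gamma := @centralizes_cubeP _ _ _ op _ _ alpha_cong n_gt0 gamma.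
split=> //; split.
  apply/cubeP; first by case: fork_cong.
  exact: (top_fork_cube_centralizes alpha_cong qop_xxy qop_yxx).
move=> gamma gamma_cong; case: (gamma_cong) => refl_g _ /(cubeP _ refl_g).
exact: (top_fork_min alpha_cong qop_xxy qop_yxx gamma_cong).
Qed.
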